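(* Consider the agents $$\dot x_i=\sum_{j=1}^N\alpha_{ij}(t)(y_j-y_i),\qquad y_i=\mathrm{sat}(x_i),\qquad i\in\mathcal V=\{1,\dots,N\},$$ with a common saturation level $s>0$ (homogeneous agents), and time-varying undirected weights satisfying the standing assumptions below. Then for every $i\in\mathcal V$ there exists $x_i^*$ with $\lim_{t\to\infty}x_i(t)=x_i^*$, and $x_i^*\in[\min_{j\in\mathcal V}x_j(t_0),\ \max_{j\in\mathcal V}x_j(t_0)]$.
   Context: $\mathrm{sat}(x)=\mathrm{sign}(x)\min\{|x|,s\}$. Standing assumptions on the time-varying graph: $\alpha_{ij}(t)=\alpha_{ji}(t)\ge0$ for all $t\ge0$, and each $\alpha_{ij}$ is continuous on $[0,\infty)$ except on a set of measure zero; solutions are Carathéodory solutions, i.e. absolutely continuous functions satisfying $x_i(t)=x_i(t_0)+\int_{t_0}^t\sum_j\alpha_{ij}(\tau)(y_j(\tau)-y_i(\tau))\,d\tau$. *)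

From Stdlib Require Import Reals Lra.
Open Scope R_scope.

Fixpoint rsum (n : nat) (f : nat -> R) : R :=
  match n with
  | O => 0
  | S m => rsum m f + f m
  end.

Fixpoint rmin_over (n : nat) (f : nat -> R) : R :=
  match n with
  | O => f O
  | S O => f O
  | S m => Rmin (rmin_over m f) (f m)
  end.
Fixpoint rmax_over (n : nat) (f : nat -> R) : R :=
  match n with
  | O => f O
  | S O => f O
  | S m => Rmax (rmax_over m f) (f m)
  end.

Definition sign (x : R) : R :=
  match Rlt_dec x 0 with
  | left _ => -1
  | right _ => match Rlt_dec 0 x with left _ => 1 | right _ => 0 end
  end.
Definition sat (s x : R) : R := sign x * Rmin (Rabs x) s.

Definition null_set (E : R -> Prop) : Prop :=
  forall eps, 0 < eps ->
    exists a b : nat -> R,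
      (forall n, a n <= b n) /\
      (forall t, E t -> exists n, a n < t < b n) /\
      (forall n, rsum n (fun k => b k - a k) <= eps).

Definition abs_continuous_on (f : R -> R) (lo hi : R) : Prop :=
  forall eps, 0 < eps -> exists delta, 0 < delta /\
    forall (n : nat) (a b : nat -> R),
      (forall k, (k < n)%nat -> lo <= a k /\ a k <= b k /\ b k <= hi) ->
      (forall k, (S k < n)%nat -> b k <= a (S k)) ->
      rsum n (fun k => b k - a k) < delta ->
      rsum n (fun k => Rabs (f (b k) - f (a k))) < eps.

Definition lim_infty (f : R -> R) (l : R) : Prop :=
  forall eps, 0 < eps -> exists T, forall t, T <= t -> Rabs (f t - l) < eps.

Definition admissible_weights (N : nat) (alpha : nat -> nat -> R -> R) : Prop :=
  forall i j, (i < N)%nat -> (j < N)%nat ->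
    (forall t, 0 <= t -> alpha i j t = alpha j i t /\ 0 <= alpha i j t) /\
    (exists E, null_set E /\
       forall t, 0 <= t -> ~ E t -> continuity_pt (alpha i j) t).

Definition caratheodory_solution (N : nat) (s : R) (alpha : nat -> nat -> R -> R)
  (t0 : R) (x : nat -> R -> R) : Prop :=
  forall i, (i < N)%nat ->
    (forall T, t0 <= T -> abs_continuous_on (x i) t0 T) /\
    (exists E, null_set E /\
       forall t, t0 < t -> ~ E t ->
         derivable_pt_lim (x i) t
           (rsum N (fun j => alpha i j t * (sat s (x j t) - sat s (x i t))))).

(* For every convex [psi] with nondecreasing derivative, [sum_i psi (x_i t)] is nonincreasing: its
   derivative [sum_(i,j) alpha_ij psi'(x_i) (sat x_j - sat x_i)] is nonpositive after
   symmetrising in [(i, j)], since [psi'] and [sat] are both nondecreasing, and an absolutely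
   continuous function whose derivative is almost everywhere nonpositive is nonincreasing.
   Taking for [psi] smoothed positive parts of [z - max_j x_j(t0)] and [min_j x_j(t0) - z] keeps
   every agent in the initial hull.  Taking [psi z = (z - c)_+^2 / 2] on the range of the agents,
   the potentials [P_c t = sum_j psi (x_j t)] are nonincreasing and bounded below, hence
   eventually almost constant, uniformly over a finite grid of levels [c].  The third difference
   [P_c - 3 P_(c+h) + 3 P_(c+2h) - P_(c+3h)] is a sum of bumps supported on [(c, c + 3h)], so
   after some time [T] every [x_i tau] lies within [2h] of one of the [N] values [x_j T]; being
   continuous, [x_i] then oscillates by at most [4 N h] after [T], and converges. *)

From Stdlib Require Import Reals Ranalysis5 Lra Lia List Classical.
Open Scope R_scope.

(** * Finite sums, extrema and saturation *)

Lemma rsum_ext n f g : (forall k, (k < n)%nat -> f k = g k) -> rsum n f = rsum n g.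
Proof.
  induction n as [|n IH]; simpl; intros H; [reflexivity|].
  rewrite IH, H; [reflexivity|lia|intros; apply H; lia].
Qed.

Lemma rsum_le n f g : (forall k, (k < n)%nat -> f k <= g k) -> rsum n f <= rsum n g.
Proof.
  induction n as [|n IH]; simpl; intros H; [lra|].
  assert (f n <= g n) by (apply H; lia).
  assert (rsum n f <= rsum n g) by (apply IH; intros; apply H; lia).
  lra.
Qed.

Lemma rsum_plus n f g : rsum n (fun k => f k + g k) = rsum n f + rsum n g.
Proof. induction n as [|n IH]; simpl; [lra|]. rewrite IH; lra. Qed.

Lemma rsum_minus n f g : rsum n (fun k => f k - g k) = rsum n f - rsum n g.
Proof. induction n as [|n IH]; simpl; [lra|]. rewrite IH; lra. Qed.

Lemma rsum_scal n c f : rsum n (fun k => c * f k) = c * rsum n f.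
Proof. induction n as [|n IH]; simpl; [lra|]. rewrite IH; lra. Qed.

Lemma rsum_zero n : rsum n (fun _ => 0) = 0.
Proof. induction n as [|n IH]; simpl; lra. Qed.

Lemma rsum_nonneg n f : (forall k, (k < n)%nat -> 0 <= f k) -> 0 <= rsum n f.
Proof. intros H. rewrite <- (rsum_zero n). now apply rsum_le. Qed.

Lemma Rabs_rsum_le n f : Rabs (rsum n f) <= rsum n (fun k => Rabs (f k)).
Proof.
  induction n as [|n IH]; simpl; [rewrite Rabs_R0; lra|].
  eapply Rle_trans; [apply Rabs_triang|lra].
Qed.

Lemma rsum_pos_ex n f : 0 < rsum n f -> exists k, (k < n)%nat /\ 0 < f k.
Proof.
  intros H. apply NNPP. intros C.
  assert (rsum n f <= 0); [|lra].
  rewrite <- (rsum_zero n). apply rsum_le. intros k Hk.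
  apply Rnot_lt_le. intros Hf. apply C. eauto.
Qed.

Lemma rsum_swap n m (a : nat -> nat -> R) :
  rsum n (fun i => rsum m (fun j => a i j)) = rsum m (fun j => rsum n (fun i => a i j)).
Proof.
  induction n as [|n IH]; simpl; [now rewrite rsum_zero|].
  rewrite IH, <- rsum_plus. reflexivity.
Qed.

Lemma rsum_term_le n f k :
  (forall j, (j < n)%nat -> 0 <= f j) -> (k < n)%nat -> f k <= rsum n f.
Proof.
  induction n as [|n IH]; intros H Hk; [lia|]. simpl.
  assert (0 <= f n) by (apply H; lia).
  destruct (Nat.eq_dec k n) as [->|Hkn].
  - assert (0 <= rsum n f) by (apply rsum_nonneg; intros; apply H; lia). lra.
  - assert (f k <= rsum n f) by (apply IH; [intros; apply H|]; lia). lra.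
Qed.

Lemma rsum_le_add n k f : (forall j, 0 <= f j) -> rsum n f <= rsum (n + k) f.
Proof.
  intros H. induction k as [|k IH]; [rewrite Nat.add_0_r; lra|].
  replace (n + S k)%nat with (S (n + k)) by lia. simpl.
  specialize (H (n + k)%nat). lra.
Qed.

Lemma rsum_double_nonpos n (a : nat -> nat -> R) :
  (forall i j, (i < n)%nat -> (j < n)%nat -> a i j + a j i <= 0) ->
  rsum n (fun i => rsum n (fun j => a i j)) <= 0.
Proof.
  intros H.
  assert (Hsym : 2 * rsum n (fun i => rsum n (fun j => a i j)) =
                 rsum n (fun i => rsum n (fun j => a i j + a j i))).
  { replace (2 * rsum n (fun i => rsum n (fun j => a i j))) with
      (rsum n (fun i => rsum n (fun j => a i j)) + rsum n (fun j => rsum n (fun i => a i j)))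
      by (rewrite <- rsum_swap; lra).
    rewrite <- rsum_plus. apply rsum_ext. intros. now rewrite <- rsum_plus. }
  assert (rsum n (fun i => rsum n (fun j => a i j + a j i)) <= 0); [|lra].
  rewrite <- (rsum_zero n). apply rsum_le. intros i Hi.
  rewrite <- (rsum_zero n). apply rsum_le. intros; now apply H.
Qed.

Lemma rmin_over_le n f j : (j < n)%nat -> rmin_over n f <= f j.
Proof.
  induction n as [|[|n] IH]; intros Hj; [lia|replace j with O by lia; simpl; lra|].
  change (rmin_over (S (S n)) f) with (Rmin (rmin_over (S n) f) (f (S n))).
  destruct (Nat.eq_dec j (S n)) as [->|]; [apply Rmin_r|].
  eapply Rle_trans; [apply Rmin_l|apply IH; lia].
Qed.

Lemma rmax_over_ge n f j : (j < n)%nat -> f j <= rmax_over n f.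
Proof.
  induction n as [|[|n] IH]; intros Hj; [lia|replace j with O by lia; simpl; lra|].
  change (rmax_over (S (S n)) f) with (Rmax (rmax_over (S n) f) (f (S n))).
  destruct (Nat.eq_dec j (S n)) as [->|]; [apply Rmax_r|].
  eapply Rle_trans; [apply IH; lia|apply Rmax_l].
Qed.

Lemma Rabs_le_bounds a b : Rabs a <= b -> - b <= a <= b.
Proof.
  intros H. pose proof (Rle_abs a). pose proof (Rle_abs (- a)).
  rewrite Rabs_Ropp in *. lra.
Qed.

(* Split on an innermost [Rle_dec], so that nested [Rmin], [Rmax] and [if]s
   are resolved one level at a time. *)
Ltac case_Rle_dec := match goal with |- context [Rle_dec ?a ?b] =>
  lazymatch a with context [Rle_dec _ _] => fail | _ =>
  lazymatch b with context [Rle_dec _ _] => fail | _ => destruct (Rle_dec a b) end end end.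

Lemma sat_clamp s x : 0 < s -> sat s x = Rmax (- s) (Rmin x s).
Proof.
  intros Hs. unfold sat, sign, Rmin, Rmax.
  destruct (Rlt_dec x 0); [|destruct (Rlt_dec 0 x)];
    [rewrite Rabs_left by lra|rewrite Rabs_right by lra|
     replace x with 0 by lra; rewrite Rabs_R0];
    repeat case_Rle_dec; lra.
Qed.

Lemma sat_le_compat s x y : 0 < s -> x <= y -> sat s x <= sat s y.
Proof.
  intros Hs H. rewrite !sat_clamp by exact Hs. unfold Rmin, Rmax. repeat case_Rle_dec; lra.
Qed.

(** * Null sets and absolute continuity *)

Definition interleave (f g : nat -> R) (n : nat) : R :=
  if Nat.even n then f (Nat.div2 n) else g (Nat.div2 n).

Lemma interleave_even f g n : interleave f g (2 * n) = f n.
Proof. unfold interleave. now rewrite Nat.even_even, Nat.div2_double. Qed.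

Lemma interleave_odd f g n : interleave f g (2 * n + 1) = g n.
Proof. unfold interleave. now rewrite Nat.even_odd, Nat.div2_odd'. Qed.

Lemma rsum_interleave m (f g : nat -> R) :
  rsum (2 * m) (interleave f g) = rsum m f + rsum m g.
Proof.
  induction m as [|m IH]; [simpl; lra|].
  replace (2 * S m)%nat with (S (S (2 * m))) by lia.
  change (rsum (S (S (2 * m))) (interleave f g)) with
    (rsum (2 * m) (interleave f g) + interleave f g (2 * m)%nat + interleave f g (S (2 * m))).
  replace (S (2 * m)) with (2 * m + 1)%nat by lia.
  rewrite IH, interleave_even, interleave_odd. simpl. lra.
Qed.

Lemma null_set_union (E1 E2 : R -> Prop) :
  null_set E1 -> null_set E2 -> null_set (fun t => E1 t \/ E2 t).
Proof.
  intros H1 H2 eps Heps.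
  destruct (H1 (eps / 2)) as [a1 [b1 [Hab1 [C1 S1]]]]; [lra|].
  destruct (H2 (eps / 2)) as [a2 [b2 [Hab2 [C2 S2]]]]; [lra|].
  exists (interleave a1 a2), (interleave b1 b2). split; [|split].
  - intros n. unfold interleave. destruct (Nat.even n); auto.
  - intros t [Ht|Ht].
    + destruct (C1 t Ht) as [n Hn]. exists (2 * n)%nat. now rewrite !interleave_even.
    + destruct (C2 t Ht) as [n Hn]. exists (2 * n + 1)%nat. now rewrite !interleave_odd.
  - intros n.
    assert (Hnn : forall j, 0 <= interleave b1 b2 j - interleave a1 a2 j).
    { intros j. unfold interleave.
      destruct (Nat.even j); [specialize (Hab1 (Nat.div2 j))|specialize (Hab2 (Nat.div2 j))]; lra. }
    eapply Rle_trans; [apply (rsum_le_add n n), Hnn|].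
    replace (n + n)%nat with (2 * n)%nat by lia.
    rewrite (rsum_ext _ _ (interleave (fun k => b1 k - a1 k) (fun k => b2 k - a2 k)))
      by (intros k _; unfold interleave; now destruct (Nat.even k)).
    rewrite rsum_interleave. specialize (S1 n). specialize (S2 n). lra.
Qed.

Lemma null_set_singleton (c : R) : null_set (fun t => t = c).
Proof.
  intros eps Heps.
  exists (fun n => match n with O => c - eps / 4 | _ => 0 end),
         (fun n => match n with O => c + eps / 4 | _ => 0 end).
  split; [|split].
  - intros [|n]; lra.
  - intros t ->. exists O. lra.
  - intros n. induction n as [|n IH]; [simpl; lra|]. simpl. destruct n; simpl in *; lra.
Qed.

Lemma null_set_forall_lt N (D : R -> Prop) (P : nat -> R -> Prop) :
  (forall i, (i < N)%nat -> exists E, null_set E /\ forall t, D t -> ~ E t -> P i t) ->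
  exists E, null_set E /\ forall i, (i < N)%nat -> forall t, D t -> ~ E t -> P i t.
Proof.
  induction N as [|N IH]; intros H.
  - exists (fun t => t = 0). split; [apply null_set_singleton|intros; lia].
  - destruct IH as [E1 [HE1 P1]]; [intros; apply H; lia|].
    destruct (H N ltac:(lia)) as [E2 [HE2 P2]].
    exists (fun t => E1 t \/ E2 t). split; [now apply null_set_union|].
    intros i Hi t Ht HE. destruct (Nat.eq_dec i N) as [->|].
    + apply P2; auto.
    + apply P1; auto; lia.
Qed.

Lemma abs_continuous_on_sub f lo hi lo' hi' :
  abs_continuous_on f lo hi -> lo <= lo' -> hi' <= hi -> abs_continuous_on f lo' hi'.
Proof.
  intros H H1 H2 eps Heps. destruct (H eps Heps) as [d [Hd Hp]].
  exists d. split; [exact Hd|]. intros n a b Ha Hs Hl. apply Hp; auto.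
  intros k Hk. specialize (Ha k Hk). lra.
Qed.

Lemma abs_continuous_on_increment f lo hi eps :
  abs_continuous_on f lo hi -> 0 < eps -> exists d, 0 < d /\
    forall u v, lo <= u -> u <= v -> v <= hi -> v - u < d -> Rabs (f v - f u) < eps.
Proof.
  intros H Heps. destruct (H eps Heps) as [d [Hd Hp]]. exists d. split; [exact Hd|].
  intros u v H1 H2 H3 H4. specialize (Hp 1%nat (fun _ => u) (fun _ => v)). simpl in Hp.
  assert (0 + Rabs (f v - f u) < eps); [|lra].
  apply Hp; intros; lra || lia.
Qed.

Lemma abs_continuous_on_continuity_pt f lo hi t :
  abs_continuous_on f lo hi -> lo < t < hi -> continuity_pt f t.
Proof.
  intros H Ht. unfold continuity_pt, continue_in, limit1_in, limit_in. simpl. unfold R_dist.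
  intros eps Heps. destruct (abs_continuous_on_increment f lo hi eps H Heps) as [d [Hd Hp]].
  set (r := Rmin d (Rmin (t - lo) (hi - t))).
  assert (Hr : r <= d /\ r <= t - lo /\ r <= hi - t).
  { unfold r. pose proof (Rmin_l d (Rmin (t - lo) (hi - t))).
    pose proof (Rmin_r d (Rmin (t - lo) (hi - t))).
    pose proof (Rmin_l (t - lo) (hi - t)). pose proof (Rmin_r (t - lo) (hi - t)). lra. }
  exists r. split; [unfold r; repeat apply Rmin_pos; lra|].
  intros y [_ Hy]. destruct (Rle_dec y t).
  - rewrite Rabs_left1 in Hy by lra. rewrite Rabs_minus_sym. apply Hp; lra.
  - rewrite Rabs_right in Hy by lra. apply Hp; lra.
Qed.

Lemma abs_continuous_on_rsum_variation n (x : nat -> R -> R) lo hi :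
  (forall i, (i < n)%nat -> abs_continuous_on (x i) lo hi) ->
  forall eps, 0 < eps -> exists delta, 0 < delta /\
    forall (m : nat) (a b : nat -> R),
      (forall k, (k < m)%nat -> lo <= a k /\ a k <= b k /\ b k <= hi) ->
      (forall k, (S k < m)%nat -> b k <= a (S k)) ->
      rsum m (fun k => b k - a k) < delta ->
      rsum m (fun k => rsum n (fun i => Rabs (x i (b k) - x i (a k)))) < eps.
Proof.
  induction n as [|n IH]; intros Hx eps Heps.
  - exists 1. split; [lra|]. intros. simpl. now rewrite rsum_zero.
  - destruct (IH (fun i Hi => Hx i ltac:(lia)) (eps / 2)) as [d1 [Hd1 P1]]; [lra|].
    destruct (Hx n ltac:(lia) (eps / 2)) as [d2 [Hd2 P2]]; [lra|].
    exists (Rmin d1 d2). split; [now apply Rmin_pos|].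
    intros m a b Ha Hs Hl. simpl. rewrite rsum_plus.
    pose proof (Rmin_l d1 d2). pose proof (Rmin_r d1 d2).
    assert (rsum m (fun k => rsum n (fun i => Rabs (x i (b k) - x i (a k)))) < eps / 2)
      by (apply P1; auto; lra).
    assert (rsum m (fun k => Rabs (x n (b k) - x n (a k))) < eps / 2) by (apply P2; auto; lra).
    lra.
Qed.

Lemma abs_continuous_on_rsum_lipschitz n (x : nat -> R -> R) lo hi (psi : R -> R) L :
  0 < L -> (forall u v, Rabs (psi u - psi v) <= L * Rabs (u - v)) ->
  (forall i, (i < n)%nat -> abs_continuous_on (x i) lo hi) ->
  abs_continuous_on (fun t => rsum n (fun i => psi (x i t))) lo hi.
Proof.
  intros HL Hpsi Hx eps Heps.
  destruct (abs_continuous_on_rsum_variation n x lo hi Hx (eps / L)) as [d [Hd P]];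
    [now apply Rdiv_lt_0_compat|].
  exists d. split; [exact Hd|]. intros m a b Ha Hs Hl.
  specialize (P m a b Ha Hs Hl).
  apply Rle_lt_trans with (L * rsum m (fun k => rsum n (fun i => Rabs (x i (b k) - x i (a k))))).
  - rewrite <- rsum_scal. apply rsum_le. intros k Hk.
    rewrite <- rsum_minus. eapply Rle_trans; [apply Rabs_rsum_le|].
    rewrite <- rsum_scal. apply rsum_le. intros. apply Hpsi.
  - apply Rmult_lt_compat_l with (r := L) in P; [|exact HL].
    replace (L * (eps / L)) with eps in P by (field; lra). exact P.
Qed.

(** * Monotonicity from an almost everywhere nonpositive derivative *)

Lemma real_induction (P : R -> Prop) a b : a <= b -> P a ->
  (forall s, a <= s <= b -> exists del, 0 < del /\
     forall u v, s - del < u -> u <= s -> s <= v -> v < s + del -> a <= u -> P u -> P v) ->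
  P b.
Proof.
  intros Hab Pa Hstep.
  set (S := fun t => a <= t <= b /\ P t).
  assert (Hbd : bound S) by (exists b; intros t [Ht _]; lra).
  destruct (completeness S Hbd (ex_intro _ a (conj (conj (Rle_refl a) Hab) Pa))) as [s [Hub Hlub]].
  assert (Has : a <= s) by (apply Hub; split; [lra|exact Pa]).
  assert (Hsb : s <= b) by (apply Hlub; intros t [Ht _]; lra).
  destruct (Hstep s (conj Has Hsb)) as [del [Hdel Hp]].
  assert (Ht : exists t, S t /\ s - del < t).
  { apply NNPP. intros C. assert (s <= s - del); [|lra]. apply Hlub. intros t Ht.
    apply Rnot_lt_le. intros Hlt. apply C. eauto. }
  destruct Ht as [t [[Ht Pt] Hdt]].
  assert (t <= s) by (apply Hub; split; auto).
  assert (Ps : P s) by (apply (Hp t s); lra || exact Pt).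
  destruct (Req_dec s b) as [<-|Hsb']; [exact Ps|exfalso].
  set (v := Rmin b (s + del / 2)).
  assert (s < v) by (unfold v, Rmin; destruct (Rle_dec b (s + del / 2)); lra).
  assert (v <= b) by apply Rmin_l.
  assert (v <= s + del / 2) by apply Rmin_r.
  assert (v <= s); [|lra].
  apply Hub. split; [lra|]. apply (Hp s v); lra || exact Ps.
Qed.

Definition overlap (aa bb : nat -> R) a m t := Rmax 0 (Rmin (bb m) t - Rmax (aa m) a).

Lemma overlap_nonneg aa bb a m t : 0 <= overlap aa bb a m t.
Proof. apply Rmax_l. Qed.

Lemma overlap_le_compat aa bb a m t t' : t <= t' -> overlap aa bb a m t <= overlap aa bb a m t'.
Proof. intros H. unfold overlap, Rmax, Rmin. repeat case_Rle_dec; lra. Qed.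

Lemma overlap_le aa bb a m t : aa m <= bb m -> overlap aa bb a m t <= bb m - aa m.
Proof. intros H. unfold overlap, Rmax, Rmin. repeat case_Rle_dec; lra. Qed.

Lemma overlap_inside aa bb a m u v : a <= u -> u <= v -> aa m < u -> v < bb m ->
  v - u <= overlap aa bb a m v - overlap aa bb a m u.
Proof. intros. unfold overlap, Rmax, Rmin. repeat case_Rle_dec; lra. Qed.

(* Invariant of a real induction on [t]: the increase of [f] on [[a, t]] exceeds [eps (t - a)]
   by at most the variation of [f] along disjoint subintervals of total length at most what the
   intervals [(aa m, bb m)] cover of [[a, t]]; at [t = b] absolute continuity makes that
   variation small. *)
Definition increment_bound (f : R -> R) a eps (aa bb : nat -> R) t :=
  exists n (A B : nat -> R) M,
    (forall k, (k < n)%nat -> a <= A k /\ A k <= B k /\ B k <= t) /\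
    (forall k, (S k < n)%nat -> B k <= A (S k)) /\
    rsum n (fun k => B k - A k) <= rsum M (fun m => overlap aa bb a m t) /\
    f t - f a <= eps * (t - a) + rsum n (fun k => Rabs (f (B k) - f (A k))).

Lemma increment_bound_refl f a eps aa bb : increment_bound f a eps aa bb a.
Proof.
  exists O, (fun _ => 0), (fun _ => 0), O. simpl.
  repeat split; intros; lia || lra.
Qed.

Lemma increment_bound_extend_slow f a eps aa bb t t' : t <= t' ->
  f t' - f t <= eps * (t' - t) ->
  increment_bound f a eps aa bb t -> increment_bound f a eps aa bb t'.
Proof.
  intros Htt Hslow [n [A [B [M [H1 [H2 [H3 H4]]]]]]].
  exists n, A, B, M. split; [|split; [|split]].
  - intros k Hk. specialize (H1 k Hk). lra.
  - exact H2.
  - eapply Rle_trans; [exact H3|]. apply rsum_le. intros. now apply overlap_le_compat.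
  - lra.
Qed.

Lemma increment_bound_extend_covered f a eps aa bb t t' m : 0 <= eps -> a <= t -> t <= t' ->
  aa m < t -> t' < bb m ->
  increment_bound f a eps aa bb t -> increment_bound f a eps aa bb t'.
Proof.
  intros Heps Hat Htt Hm1 Hm2 [n [A [B [M [H1 [H2 [H3 H4]]]]]]].
  exists (S n), (fun k => if Nat.eq_dec k n then t else A k),
    (fun k => if Nat.eq_dec k n then t' else B k), (M + S m)%nat.
  split; [|split; [|split]].
  - intros k Hk. destruct (Nat.eq_dec k n); [lra|]. specialize (H1 k ltac:(lia)). lra.
  - intros k Hk. destruct (Nat.eq_dec k n); [lia|]. destruct (Nat.eq_dec (S k) n).
    + specialize (H1 k ltac:(lia)). lra.
    + apply H2; lia.
  - simpl. destruct (Nat.eq_dec n n) as [_|]; [|lia].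
    rewrite (rsum_ext n _ (fun k => B k - A k))
      by (intros k Hk; destruct (Nat.eq_dec k n); [lia|reflexivity]).
    pose proof (rsum_le_add M (S m) (fun j => overlap aa bb a j t)
                  (fun j => overlap_nonneg _ _ _ _ _)).
    assert (overlap aa bb a m t' - overlap aa bb a m t <=
            rsum (M + S m) (fun j => overlap aa bb a j t' - overlap aa bb a j t)).
    { apply (rsum_term_le _ (fun j => overlap aa bb a j t' - overlap aa bb a j t)); [|lia].
      intros j _. pose proof (overlap_le_compat aa bb a j t t' Htt). lra. }
    assert (t' - t <= overlap aa bb a m t' - overlap aa bb a m t) by (apply overlap_inside; lra).
    rewrite rsum_minus in *. lra.
  - simpl. destruct (Nat.eq_dec n n) as [_|]; [|lia].
    rewrite (rsum_ext n (fun k => Rabs _) (fun k => Rabs (f (B k) - f (A k))))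
      by (intros k Hk; destruct (Nat.eq_dec k n); [lia|reflexivity]).
    pose proof (RRle_abs (f t' - f t)).
    assert (eps * (t - a) <= eps * (t' - a)) by (apply Rmult_le_compat_l; lra).
    lra.
Qed.

Lemma derivable_pt_lim_nonpos_increment f s d eps :
  derivable_pt_lim f s d -> d <= 0 -> 0 < eps ->
  exists del, 0 < del /\ forall u v, s - del < u -> u <= s -> s <= v -> v < s + del ->
    f v - f u <= eps * (v - u).
Proof.
  intros Hd Hd0 He. destruct (Hd eps He) as [del Hdel].
  exists (pos del). split; [apply cond_pos|]. intros u v H1 H2 H3 H4.
  assert (Hv : f v - f s <= eps * (v - s)).
  { destruct (Req_dec v s) as [->|]; [lra|].
    specialize (Hdel (v - s) ltac:(lra) ltac:(rewrite Rabs_right; lra)).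
    replace (s + (v - s)) with v in Hdel by lra.
    apply Rabs_def2 in Hdel. destruct Hdel as [Hl _].
    assert ((f v - f s) / (v - s) < eps + d) by lra.
    apply (Rmult_lt_compat_r (v - s)) in H0; [|lra].
    field_simplify in H0; [nra|lra]. }
  assert (Hu : f s - f u <= eps * (s - u)).
  { destruct (Req_dec u s) as [->|]; [lra|].
    specialize (Hdel (u - s) ltac:(lra) ltac:(rewrite Rabs_left; lra)).
    replace (s + (u - s)) with u in Hdel by lra.
    apply Rabs_def2 in Hdel. destruct Hdel as [Hl _].
    assert ((f u - f s) / (u - s) < eps + d) by lra.
    replace ((f u - f s) / (u - s)) with ((f s - f u) / (s - u)) in H0 by (field; lra).
    apply (Rmult_lt_compat_r (s - u)) in H0; [|lra].
    field_simplify in H0; [nra|lra]. }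
  lra.
Qed.

Lemma abs_continuous_on_increment_le f a b E eps : a < b -> 0 < eps ->
  abs_continuous_on f a b -> null_set E ->
  (forall t, a < t < b -> ~ E t -> exists d, derivable_pt_lim f t d /\ d <= 0) ->
  f b - f a <= eps * (b - a) + eps.
Proof.
  intros Hab He Hac HE Hd.
  destruct (Hac eps He) as [dA [HdA PA]].
  set (E' := fun t => (E t \/ t = a) \/ t = b).
  assert (HE' : null_set E')
    by (apply null_set_union; [apply null_set_union|]; auto using null_set_singleton).
  destruct (HE' (dA / 2)) as [aa [bb [Haabb [Hcov Hsum]]]]; [lra|].
  assert (Hb : increment_bound f a eps aa bb b).
  { apply (real_induction _ a b); [lra|apply increment_bound_refl|]. intros s Hs.
    destruct (classic (E' s)) as [HEs|HEs].
    - destruct (Hcov s HEs) as [m Hm].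
      exists (Rmin (s - aa m) (bb m - s)). split; [apply Rmin_pos; lra|].
      pose proof (Rmin_l (s - aa m) (bb m - s)). pose proof (Rmin_r (s - aa m) (bb m - s)).
      intros u v H1 H2 H3 H4 Hau HPu.
      apply (increment_bound_extend_covered f a eps aa bb u v m); [lra..|exact HPu].
    - assert (Hs' : a < s < b)
        by (split; apply Rnot_le_lt; intros C; apply HEs; [left; right|right]; lra).
      destruct (Hd s Hs') as [d [Hd1 Hd2]]; [intros C; apply HEs; left; now left|].
      destruct (derivable_pt_lim_nonpos_increment f s d eps Hd1 Hd2 He) as [del [Hdel P]].
      exists del. split; [exact Hdel|].
      intros u v H1 H2 H3 H4 Hau HPu.
      apply (increment_bound_extend_slow f a eps aa bb u v); [lra|now apply P|exact HPu]. }
  destruct Hb as [n [A [B [M [H1 [H2 [H3 H4]]]]]]].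
  assert (rsum n (fun k => B k - A k) < dA).
  { eapply Rle_lt_trans; [exact H3|].
    eapply Rle_lt_trans; [apply rsum_le with (g := fun m => bb m - aa m)|].
    - intros. now apply overlap_le.
    - specialize (Hsum M). lra. }
  assert (rsum n (fun k => Rabs (f (B k) - f (A k))) < eps) by (apply PA; auto).
  lra.
Qed.

Lemma abs_continuous_on_nonincreasing f a b E : a <= b ->
  abs_continuous_on f a b -> null_set E ->
  (forall t, a < t < b -> ~ E t -> exists d, derivable_pt_lim f t d /\ d <= 0) ->
  f b <= f a.
Proof.
  intros Hab Hac HE Hd. destruct (Req_dec a b) as [<-|Hne]; [lra|].
  assert (f b - f a <= 0); [|lra].
  apply Rle_plus_epsilon. intros eps He.
  set (eps' := eps / (b - a + 1)).
  assert (He' : 0 < eps') by (apply Rdiv_lt_0_compat; lra).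
  replace (0 + eps) with (eps' * (b - a) + eps') by (unfold eps'; field; lra).
  apply (abs_continuous_on_increment_le f a b E); auto; lra.
Qed.

(** * Convex potentials along solutions *)

(* A convex C^1 smoothing of the positive part; the affine tail beyond [K] makes it globally
   Lipschitz, so that [huber K] composed with an absolutely continuous [x_i] stays absolutely
   continuous. *)
Definition huber K z :=
  if Rle_dec z 0 then 0 else if Rle_dec z K then z * z / 2 else K * z - K * K / 2.

Definition huber_deriv K z := if Rle_dec z 0 then 0 else if Rle_dec z K then z else K.

Lemma huber_taylor K z h : 0 < K ->
  Rabs (huber K (z + h) - huber K z - h * huber_deriv K z) <= h * h / 2.
Proof. intros HK. unfold huber, huber_deriv. repeat case_Rle_dec; apply Rabs_le; split; nra. Qed.

Lemma huber_lipschitz K u v : 0 < K -> Rabs (huber K u - huber K v) <= K * Rabs (u - v).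
Proof.
  intros HK. unfold huber. destruct (Rle_dec u v).
  - rewrite (Rabs_left1 (u - v)) by lra. repeat case_Rle_dec; apply Rabs_le; split; nra.
  - rewrite (Rabs_right (u - v)) by lra. repeat case_Rle_dec; apply Rabs_le; split; nra.
Qed.

Lemma huber_deriv_le_compat K u v : 0 < K -> u <= v -> huber_deriv K u <= huber_deriv K v.
Proof. intros HK H. unfold huber_deriv. repeat case_Rle_dec; lra. Qed.

Lemma huber_nonneg K z : 0 < K -> 0 <= huber K z.
Proof. intros HK. unfold huber. repeat case_Rle_dec; nra. Qed.

Lemma huber_pos K z : 0 < K -> 0 < z -> 0 < huber K z.
Proof. intros HK Hz. unfold huber. repeat case_Rle_dec; nra. Qed.

Lemma huber_nonpos K z : z <= 0 -> huber K z = 0.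
Proof. intros Hz. unfold huber. repeat case_Rle_dec; lra. Qed.

Lemma huber_quadratic K z : z <= K -> huber K z = Rmax 0 z * Rmax 0 z / 2.
Proof.
  intros Hz. unfold huber, Rmax. repeat case_Rle_dec; lra || (replace z with 0 by lra; lra).
Qed.

Lemma derivable_pt_lim_taylor (g dg : R -> R) C z : 0 <= C ->
  (forall h, Rabs (g (z + h) - g z - h * dg z) <= C * (h * h)) ->
  derivable_pt_lim g z (dg z).
Proof.
  intros HC H eps Heps.
  assert (HC1 : 0 < C + 1) by lra.
  exists (mkposreal (eps / (C + 1)) (Rdiv_lt_0_compat _ _ Heps HC1)). simpl.
  intros h Hh Hlt. specialize (H h).
  replace ((g (z + h) - g z) / h - dg z) with ((g (z + h) - g z - h * dg z) * / h) by (field; auto).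
  rewrite Rabs_mult, Rabs_inv.
  assert (Hh0 : 0 < Rabs h) by (apply Rabs_pos_lt; auto).
  replace (h * h) with (Rabs h * Rabs h) in H by (rewrite <- Rabs_mult; apply Rabs_right; nra).
  apply Rle_lt_trans with (C * (Rabs h * Rabs h) * / Rabs h).
  { apply Rmult_le_compat_r; [left; now apply Rinv_0_lt_compat|exact H]. }
  replace (C * (Rabs h * Rabs h) * / Rabs h) with (C * Rabs h) by (field; lra).
  apply Rmult_lt_compat_l with (r := C + 1) in Hlt; [|lra].
  replace ((C + 1) * (eps / (C + 1))) with eps in Hlt by (field; lra).
  nra.
Qed.

Lemma derivable_pt_lim_rsum n (g : nat -> R -> R) (dg : nat -> R) t :
  (forall i, (i < n)%nat -> derivable_pt_lim (g i) t (dg i)) ->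
  derivable_pt_lim (fun u => rsum n (fun i => g i u)) t (rsum n dg).
Proof.
  induction n as [|n IH]; intros H; simpl.
  - apply derivable_pt_lim_ext with (f := fct_cte 0); [reflexivity|apply derivable_pt_lim_const].
  - apply derivable_pt_lim_ext with (f := ((fun u => rsum n (fun i => g i u)) + g n)%F);
      [reflexivity|].
    apply derivable_pt_lim_plus; [apply IH; intros; apply H|apply H]; lia.
Qed.

Lemma nondecreasing_product_nonneg (g h : R -> R) u v :
  (forall u v, u <= v -> g u <= g v) -> (forall u v, u <= v -> h u <= h v) ->
  0 <= (g v - g u) * (h v - h u).
Proof.
  intros Hg Hh. destruct (Rle_dec u v) as [Huv|Huv].
  - pose proof (Hg u v Huv). pose proof (Hh u v Huv). nra.
  - assert (v <= u) by lra. pose proof (Hg v u H). pose proof (Hh v u H). nra.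
Qed.

(* Symmetrising in [(i, j)] turns the sum into
   [- 1/2 sum_(i,j) a_ij (g z_j - g z_i) (y z_j - y z_i)]. *)
Lemma rsum_consensus_flow_nonpos N (a : nat -> nat -> R) (z : nat -> R) (g y : R -> R) :
  (forall i j, (i < N)%nat -> (j < N)%nat -> a i j = a j i /\ 0 <= a i j) ->
  (forall u v, u <= v -> g u <= g v) -> (forall u v, u <= v -> y u <= y v) ->
  rsum N (fun i => g (z i) * rsum N (fun j => a i j * (y (z j) - y (z i)))) <= 0.
Proof.
  intros Ha Hg Hy.
  rewrite (rsum_ext N _ (fun i => rsum N (fun j => g (z i) * (a i j * (y (z j) - y (z i))))))
    by (intros; now rewrite <- rsum_scal).
  apply rsum_double_nonpos. intros i j Hi Hj.
  destruct (Ha i j Hi Hj) as [Hsym Hpos]. rewrite <- Hsym.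
  pose proof (nondecreasing_product_nonneg g y (z i) (z j) Hg Hy).
  assert (0 <= a i j * ((g (z j) - g (z i)) * (y (z j) - y (z i)))) by (apply Rmult_le_pos; lra).
  nra.
Qed.

Lemma convex_potential_nonincreasing N s alpha t0 x (psi dpsi : R -> R) L :
  0 < s -> 0 <= t0 -> admissible_weights N alpha -> caratheodory_solution N s alpha t0 x ->
  0 < L -> (forall u v, Rabs (psi u - psi v) <= L * Rabs (u - v)) ->
  (forall z, derivable_pt_lim psi z (dpsi z)) -> (forall u v, u <= v -> dpsi u <= dpsi v) ->
  forall t1 t2, t0 <= t1 -> t1 <= t2 ->
    rsum N (fun i => psi (x i t2)) <= rsum N (fun i => psi (x i t1)).
Proof.
  intros Hs Ht0 Hadm Hsol HL Hlip Hder Hmono t1 t2 H1 H2.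
  destruct (null_set_forall_lt N (fun t => t0 < t) (fun i t => derivable_pt_lim (x i) t
      (rsum N (fun j => alpha i j t * (sat s (x j t) - sat s (x i t)))))) as [E [HE PE]].
  { intros i Hi. apply (Hsol i Hi). }
  apply (abs_continuous_on_nonincreasing (fun t => rsum N (fun i => psi (x i t))) t1 t2 E); auto.
  - apply abs_continuous_on_rsum_lipschitz with (L := L); auto. intros i Hi.
    apply abs_continuous_on_sub with t0 t2; [apply (Hsol i Hi)|..]; lra.
  - intros t Ht HEt. eexists. split.
    + apply derivable_pt_lim_rsum. intros i Hi.
      apply derivable_pt_lim_ext with (f := comp psi (x i)); [reflexivity|].
      apply derivable_pt_lim_comp; [apply PE; auto; lra|apply Hder].
    + apply (rsum_consensus_flow_nonpos N (fun i j => alpha i j t) (fun i => x i t) dpsi (sat s));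
        [|exact Hmono|intros; now apply sat_le_compat].
      intros i j Hi Hj. apply (Hadm i j Hi Hj). lra.
Qed.

Definition potential N (x : nat -> R -> R) K c t := rsum N (fun j => huber K (x j t - c)).

Section Potentials.

Variables (N : nat) (s : R) (alpha : nat -> nat -> R -> R) (t0 : R) (x : nat -> R -> R).
Hypotheses (Hs : 0 < s) (Ht0 : 0 <= t0) (Hadm : admissible_weights N alpha)
  (Hsol : caratheodory_solution N s alpha t0 x).

Lemma potential_nonincreasing K c : 0 < K ->
  forall t1 t2, t0 <= t1 -> t1 <= t2 -> potential N x K c t2 <= potential N x K c t1.
Proof.
  intros HK.
  apply (convex_potential_nonincreasing N s alpha t0 x (fun z => huber K (z - c))
           (fun z => huber_deriv K (z - c)) K); auto.
  - intros u v. replace (u - v) with ((u - c) - (v - c)) by ring. now apply huber_lipschitz.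
  - intros z.
    apply (derivable_pt_lim_taylor (fun z => huber K (z - c))
             (fun z => huber_deriv K (z - c)) (1 / 2));
      [lra|]. intros h.
    replace (z + h - c) with ((z - c) + h) by ring.
    eapply Rle_trans; [apply huber_taylor; exact HK|lra].
  - intros u v Huv. apply huber_deriv_le_compat; lra.
Qed.

Lemma copotential_nonincreasing K c : 0 < K ->
  forall t1 t2, t0 <= t1 -> t1 <= t2 ->
    rsum N (fun j => huber K (c - x j t2)) <= rsum N (fun j => huber K (c - x j t1)).
Proof.
  intros HK.
  apply (convex_potential_nonincreasing N s alpha t0 x (fun z => huber K (c - z))
           (fun z => - huber_deriv K (c - z)) K); auto.
  - intros u v. replace (u - v) with (- ((c - u) - (c - v))) by ring.
    rewrite Rabs_Ropp. now apply huber_lipschitz.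
  - intros z.
    apply (derivable_pt_lim_taylor (fun z => huber K (c - z))
             (fun z => - huber_deriv K (c - z)) (1 / 2));
      [lra|]. intros h.
    replace (c - (z + h)) with ((c - z) + - h) by ring.
    replace (h * - huber_deriv K (c - z)) with (- h * huber_deriv K (c - z)) by ring.
    eapply Rle_trans; [apply huber_taylor; exact HK|lra].
  - intros u v Huv. apply Ropp_le_contravar, huber_deriv_le_compat; lra.
Qed.

(* The (co)potentials at the endpoints of the initial hull are nonnegative, nonincreasing and
   vanish at [t0]. *)
Lemma solution_in_hull j t : (j < N)%nat -> t0 <= t ->
  rmin_over N (fun k => x k t0) <= x j t <= rmax_over N (fun k => x k t0).
Proof.
  intros Hj Ht.
  set (m0 := rmin_over N (fun k => x k t0)). set (M0 := rmax_over N (fun k => x k t0)).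
  split; apply Rnot_lt_le; intros C.
  - assert (H0 : rsum N (fun k => huber 1 (m0 - x k t0)) = 0).
    { rewrite <- (rsum_zero N). apply rsum_ext. intros k Hk. apply huber_nonpos.
      pose proof (rmin_over_le N (fun k => x k t0) k Hk). unfold m0. lra. }
    pose proof (copotential_nonincreasing 1 m0 Rlt_0_1 t0 t (Rle_refl t0) Ht).
    pose proof (rsum_term_le N (fun k => huber 1 (m0 - x k t)) j
                  (fun k _ => huber_nonneg 1 _ Rlt_0_1) Hj).
    pose proof (huber_pos 1 (m0 - x j t) Rlt_0_1 ltac:(lra)).
    simpl in *. lra.
  - assert (H0 : potential N x 1 M0 t0 = 0).
    { unfold potential. rewrite <- (rsum_zero N). apply rsum_ext. intros k Hk. apply huber_nonpos.
      pose proof (rmax_over_ge N (fun k => x k t0) k Hk). unfold M0. lra. }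
    pose proof (potential_nonincreasing 1 M0 Rlt_0_1 t0 t (Rle_refl t0) Ht).
    pose proof (rsum_term_le N (fun k => huber 1 (x k t - M0)) j
                  (fun k _ => huber_nonneg 1 _ Rlt_0_1) Hj).
    pose proof (huber_pos 1 (x j t - M0) Rlt_0_1 ltac:(lra)).
    unfold potential in *. simpl in *. lra.
Qed.

Lemma solution_continuity_pt j t : (j < N)%nat -> t0 < t -> continuity_pt (x j) t.
Proof.
  intros Hj Ht. apply (abs_continuous_on_continuity_pt (x j) t0 (t + 1)); [|lra].
  apply (Hsol j Hj). lra.
Qed.

End Potentials.

(** * Convergence *)

Lemma interval_cover_length rho : 0 < rho -> forall (L : list R) p q, p <= q ->
  (forall y, p <= y <= q -> exists a, In a L /\ Rabs (y - a) < rho) ->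
  q - p <= 2 * rho * INR (length L).
Proof.
  intros Hr L. remember (length L) as n eqn:Hn. revert L Hn.
  induction n as [n IH] using Wf_nat.lt_wf_ind. intros L Hn p q Hpq Hc.
  destruct (Hc p ltac:(lra)) as [a [Ha Hpa]].
  pose proof (remove_length_lt Req_dec_T L a Ha) as Hlen.
  assert (H1 : 1 <= INR (length L))
    by (apply (le_INR 1); destruct L; simpl in *; [contradiction|lia]).
  apply Rabs_def2 in Hpa.
  destruct (Rlt_dec q (a + rho)); [subst n; nra|].
  assert (q - (a + rho) <= 2 * rho * INR (length (remove Req_dec_T a L))).
  { apply (IH (length (remove Req_dec_T a L)) ltac:(lia) _ eq_refl); [lra|]. intros y Hy.
    destruct (Hc y ltac:(lra)) as [a' [Ha' Hya']]. exists a'. split; [|exact Hya'].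
    apply in_in_remove; [|exact Ha']. intros ->. apply Rabs_def2 in Hya'. lra. }
  assert (INR (length (remove Req_dec_T a L)) <= INR (length L) - 1)
    by (rewrite <- (minus_INR _ 1) by lia; apply le_INR; lia).
  subst n. nra.
Qed.

(* By the intermediate value theorem the values of [g] on [[T, t]] fill the interval between
   [g T] and [g t], which is therefore covered by the [rho]-neighbourhoods of [L]. *)
Lemma continuity_oscillation_le (g : R -> R) T t rho (L : list R) : 0 < rho -> T <= t ->
  (forall tau, T <= tau <= t -> continuity_pt g tau) ->
  (forall tau, T <= tau <= t -> exists a, In a L /\ Rabs (g tau - a) < rho) ->
  Rabs (g t - g T) <= 2 * rho * INR (length L).
Proof.
  intros Hr HT Hc Hcov.
  assert (Hivt : forall y, Rmin (g T) (g t) <= y <= Rmax (g T) (g t) ->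
                   exists tau, T <= tau <= t /\ g tau = y).
  { intros y Hy.
    destruct (Req_dec y (g T)) as [->|HyT]; [exists T; split; [lra|reflexivity]|].
    destruct (Req_dec y (g t)) as [->|Hyt]; [exists t; split; [lra|reflexivity]|].
    assert (HTt : T < t).
    { destruct (Req_dec T t) as [<-|]; [|lra]. rewrite Rmin_left, Rmax_left in Hy; lra. }
    assert (Hcy : forall a, T <= a <= t -> continuity_pt (fun u => g u - y) a /\
                                           continuity_pt (fun u => y - g u) a).
    { intros a Ha. assert (Hy' : continuity_pt (fun _ => y) a)
        by (apply continuity_pt_const; intros ? ?; reflexivity).
      split; apply continuity_pt_minus; auto. }
    destruct (Rle_dec (g T) (g t)).
    - rewrite Rmin_left, Rmax_right in Hy by lra.
      destruct (IVT_interv (fun u => g u - y) T t) as [z [Hz1 Hz2]];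
        [intros; now apply Hcy|exact HTt|lra|lra|].
      exists z. split; [exact Hz1|lra].
    - rewrite Rmin_right, Rmax_left in Hy by lra.
      destruct (IVT_interv (fun u => y - g u) T t) as [z [Hz1 Hz2]];
        [intros; now apply Hcy|exact HTt|lra|lra|].
      exists z. split; [exact Hz1|lra]. }
  assert (Rmax (g T) (g t) - Rmin (g T) (g t) <= 2 * rho * INR (length L)).
  { apply interval_cover_length; [exact Hr|unfold Rmin, Rmax; repeat case_Rle_dec; lra|].
    intros y Hy. destruct (Hivt y Hy) as [tau [Htau <-]]. now apply Hcov. }
  unfold Rmin, Rmax in *. destruct (Rle_dec (g T) (g t)).
  - rewrite Rabs_right by lra. lra.
  - rewrite Rabs_left by lra. lra.
Qed.

Lemma lim_infty_cauchy (g : R -> R) t0 :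
  (forall eta, 0 < eta -> exists T, t0 <= T /\ forall t, T <= t -> Rabs (g t - g T) <= eta) ->
  exists l, lim_infty g l.
Proof.
  intros H.
  set (u := fun n => g (t0 + INR n)).
  assert (Hc : Cauchy_crit u).
  { intros eps He. destruct (H (eps / 3)) as [T [HT P]]; [lra|].
    destruct (INR_unbounded (T - t0)) as [N0 HN0]. exists N0. intros n m Hn Hm.
    unfold R_dist, u. apply le_INR in Hn. apply le_INR in Hm.
    pose proof (Rabs_le_bounds _ _ (P (t0 + INR n) ltac:(lra))).
    pose proof (Rabs_le_bounds _ _ (P (t0 + INR m) ltac:(lra))).
    apply Rabs_def1; lra. }
  destruct (R_complete u Hc) as [l Hl]. exists l.
  intros eps He. destruct (H (eps / 3)) as [T [HT P]]; [lra|].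
  destruct (INR_unbounded (T - t0)) as [N0 HN0]. destruct (Hl (eps / 3)) as [N1 HN1]; [lra|].
  exists T. intros t Ht. set (n := Nat.max N0 N1).
  specialize (HN1 n ltac:(lia)). unfold R_dist, u in HN1. apply Rabs_def2 in HN1.
  assert (INR N0 <= INR n) by (apply le_INR; lia).
  pose proof (Rabs_le_bounds _ _ (P t Ht)).
  pose proof (Rabs_le_bounds _ _ (P (t0 + INR n) ltac:(lra))).
  apply Rabs_def1; lra.
Qed.

Lemma lim_infty_bounds g l t0 a b :
  lim_infty g l -> (forall t, t0 <= t -> a <= g t <= b) -> a <= l <= b.
Proof.
  intros Hl Hb. split; apply Rnot_lt_le; intros C;
    [destruct (Hl (a - l)) as [T HT]|destruct (Hl (l - b)) as [T HT]]; try lra;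
    specialize (HT (Rmax T t0) (Rmax_l _ _)); specialize (Hb (Rmax T t0) (Rmax_r _ _));
    apply Rabs_def2 in HT; lra.
Qed.

Lemma eventually_flat (g : R -> R) t0 m : (forall t, t0 <= t -> m <= g t) ->
  (forall t1 t2, t0 <= t1 -> t1 <= t2 -> g t2 <= g t1) ->
  forall delta, 0 < delta -> forall T0, t0 <= T0 ->
    exists T, T0 <= T /\ forall t, T <= t -> g T - g t <= delta.
Proof.
  intros Hlb Hmon delta Hd T0 HT0.
  set (S := fun y => exists t, T0 <= t /\ y = - g t).
  assert (Hb : bound S) by (exists (- m); intros y [t [Ht ->]]; pose proof (Hlb t ltac:(lra)); lra).
  destruct (completeness S Hb (ex_intro _ (- g T0) (ex_intro _ T0 (conj (Rle_refl _) eq_refl))))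
    as [l [Hub Hlub]].
  assert (HT : exists T, T0 <= T /\ l - delta < - g T).
  { apply NNPP. intros C. assert (l <= l - delta); [|lra]. apply Hlub. intros y [t [Ht ->]].
    apply Rnot_lt_le. intros Hlt. apply C. exists t. split; [exact Ht|exact Hlt]. }
  destruct HT as [T [HT1 HT2]]. exists T. split; [exact HT1|]. intros t Ht.
  assert (- g t <= l) by (apply Hub; exists t; split; [lra|reflexivity]). lra.
Qed.

Lemma eventually_flat_grid (g : nat -> R -> R) t0 m :
  (forall k t, t0 <= t -> m <= g k t) ->
  (forall k t1 t2, t0 <= t1 -> t1 <= t2 -> g k t2 <= g k t1) ->
  forall delta, 0 < delta -> forall G T0, t0 <= T0 -> exists T, T0 <= T /\
    forall k, (k <= G)%nat -> forall t, T <= t -> g k T - g k t <= delta.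
Proof.
  intros Hlb Hmon delta Hd G. induction G as [|G IH]; intros T0 HT0.
  - destruct (eventually_flat (g O) t0 m (Hlb O) (Hmon O) delta Hd T0 HT0) as [T [HT P]].
    exists T. split; [exact HT|]. intros k Hk. now replace k with O by lia.
  - destruct (IH T0 HT0) as [T [HT P]].
    destruct (eventually_flat (g (S G)) t0 m (Hlb (S G)) (Hmon (S G)) delta Hd T ltac:(lra))
      as [T' [HT' P']].
    exists T'. split; [lra|]. intros k Hk t Ht. destruct (Nat.eq_dec k (S G)) as [->|]; [auto|].
    specialize (P k ltac:(lia) t ltac:(lra)). pose proof (Hmon k T T' ltac:(lra) HT'). lra.
Qed.

Lemma grid_bracket lo step : 0 < step -> forall G y, lo <= y <= lo + INR G * step ->
  exists k, (k <= G)%nat /\ lo + INR k * step <= y <= lo + INR k * step + step.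
Proof.
  intros Hs G. induction G as [|G IH]; intros y Hy.
  - exists O. simpl in *. split; [lia|lra].
  - destruct (Rlt_dec (lo + INR G * step) y) as [Hlt|Hge].
    + exists G. split; [lia|]. rewrite S_INR in *. lra.
    + destruct (IH y) as [k [Hk P]]; [split; lra|]. exists k. split; [lia|exact P].
Qed.

(* On the quadratic range of [huber K] this is the quadratic B-spline with knots [0, h, 2h, 3h]. *)
Definition bump K h w :=
  huber K w - 3 * huber K (w - h) + 3 * huber K (w - 2 * h) - huber K (w - 3 * h).

Lemma bump_nonneg K h w : 0 < h -> w <= K -> 0 <= bump K h w.
Proof.
  intros Hh Hw. unfold bump. rewrite !huber_quadratic by lra. unfold Rmax. repeat case_Rle_dec; nra.
Qed.

Lemma bump_pos_support K h w : 0 < h -> w <= K -> 0 < bump K h w -> 0 < w < 3 * h.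
Proof.
  intros Hh Hw. unfold bump. rewrite !huber_quadratic by lra. unfold Rmax. repeat case_Rle_dec; nra.
Qed.

Lemma bump_ge K h w : 0 < h -> w <= K -> h <= w <= 2 * h -> h * h / 2 <= bump K h w.
Proof.
  intros Hh Hw. unfold bump. rewrite !huber_quadratic by lra. unfold Rmax. repeat case_Rle_dec; nra.
Qed.

Lemma rsum_bump N x K h c t :
  rsum N (fun j => bump K h (x j t - c)) =
  potential N x K c t - 3 * potential N x K (c + h) t
  + 3 * potential N x K (c + 2 * h) t - potential N x K (c + 3 * h) t.
Proof.
  unfold potential. induction N as [|N IH]; simpl; [lra|]. rewrite IH. unfold bump.
  replace (x N t - c - h) with (x N t - (c + h)) by ring.
  replace (x N t - c - 2 * h) with (x N t - (c + 2 * h)) by ring.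
  replace (x N t - c - 3 * h) with (x N t - (c + 3 * h)) by ring.
  lra.
Qed.

(* The bump sum is [P_c - 3 P_(c+h) + 3 P_(c+2h) - P_(c+3h)]; since the potentials moved by at
   most [h^2/16] between [T] and [tau], it drops by at most [h^2/4] and is still positive at [T]. *)
Lemma bump_witness N x K h c T tau i : 0 < h -> (i < N)%nat ->
  (forall j, (j < N)%nat -> x j tau - c <= K /\ x j T - c <= K) ->
  h <= x i tau - c <= 2 * h ->
  (forall m, (m <= 3)%nat -> 0 <= potential N x K (c + INR m * h) T
                                  - potential N x K (c + INR m * h) tau <= h * h / 16) ->
  exists j, (j < N)%nat /\ 0 < x j T - c < 3 * h.
Proof.
  intros Hh Hi HK Hxi Hflat.
  assert (Htau : h * h / 2 <= rsum N (fun j => bump K h (x j tau - c))).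
  { apply Rle_trans with (bump K h (x i tau - c));
      [apply bump_ge; [exact Hh|apply HK, Hi|exact Hxi]|].
    apply (rsum_term_le _ (fun j => bump K h (x j tau - c))); [|exact Hi].
    intros j Hj. apply bump_nonneg; [exact Hh|apply HK, Hj]. }
  pose proof (Hflat 0%nat ltac:(lia)) as F0. pose proof (Hflat 1%nat ltac:(lia)) as F1.
  pose proof (Hflat 2%nat ltac:(lia)) as F2. pose proof (Hflat 3%nat ltac:(lia)) as F3.
  simpl INR in F0, F1, F2, F3.
  replace (c + 0 * h) with c in F0 by ring. replace (c + 1 * h) with (c + h) in F1 by ring.
  replace (c + (1 + 1) * h) with (c + 2 * h) in F2 by ring.
  replace (c + (1 + 1 + 1) * h) with (c + 3 * h) in F3 by ring.
  rewrite rsum_bump in Htau.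
  assert (HT : 0 < rsum N (fun j => bump K h (x j T - c))) by (rewrite rsum_bump; nra).
  destruct (rsum_pos_ex _ _ HT) as [j [Hj Hpos]].
  exists j. split; [exact Hj|]. apply (bump_pos_support K); [exact Hh|apply HK, Hj|exact Hpos].
Qed.

Section Convergence.

Variables (N : nat) (x : nat -> R -> R) (t0 m0 M0 : R).
Hypotheses
  (Hbound : forall j t, (j < N)%nat -> t0 <= t -> m0 <= x j t <= M0)
  (Hcont : forall j t, (j < N)%nat -> t0 < t -> continuity_pt (x j) t)
  (Hmon : forall K c, 0 < K -> forall t1 t2, t0 <= t1 -> t1 <= t2 ->
            potential N x K c t2 <= potential N x K c t1).

(* With grid step [h/2], [x i tau - h] lies within [h/2] above a grid point [c k], and the bump
   at [c k] involves the potentials at [c k], [c (k + 2)], [c (k + 4)], [c (k + 6)]; [K] is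
   chosen so that [huber K] is quadratic on the whole range [x_j - c k <= M0 - m0 + 2h]. *)
Lemma agents_near_snapshot h : 0 < h -> exists T, t0 + 1 <= T /\
  forall i tau, (i < N)%nat -> T <= tau ->
    exists j, (j < N)%nat /\ Rabs (x i tau - x j T) < 2 * h.
Proof.
  intros Hh.
  set (K := Rabs (M0 - m0) + 4 * h + 1).
  assert (HK : 0 < K /\ M0 - m0 + 4 * h + 1 <= K)
    by (pose proof (Rabs_pos (M0 - m0)); pose proof (RRle_abs (M0 - m0)); unfold K; lra).
  set (lo := m0 - 2 * h). set (step := h / 2).
  assert (Hstep : 0 < step) by (unfold step; lra).
  set (c := fun k => lo + INR k * step).
  assert (Hc : forall k, lo <= c k) by (intros k; pose proof (pos_INR k); unfold c; nra).
  destruct (INR_unbounded ((M0 - lo) / step)) as [G HG].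
  assert (HG' : M0 < c G).
  { unfold c. apply Rmult_gt_compat_r with (r := step) in HG; [|exact Hstep].
    replace ((M0 - lo) / step * step) with (M0 - lo) in HG by (field; lra). lra. }
  destruct (eventually_flat_grid (fun k t => potential N x K (c k) t) t0 0)
    with (delta := h * h / 16) (G := (G + 6)%nat) (T0 := t0 + 1) as [T [HT Hflat]].
  { intros k t _. apply rsum_nonneg. intros. apply huber_nonneg. lra. }
  { intros k t1 t2 H1 H2. apply Hmon; lra. }
  { nra. }
  { lra. }
  exists T. split; [exact HT|]. intros i tau Hi Htau.
  destruct (Hbound i tau Hi ltac:(lra)) as [Hlo Hhi].
  destruct (grid_bracket lo step Hstep G (x i tau - h)) as [k [Hk Hck]];
    [unfold c, lo in *; lra|].
  fold (c k) in Hck.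
  destruct (bump_witness N x K h (c k) T tau i Hh Hi) as [j [Hj Hjc]].
  - intros j Hj. pose proof (Hbound j tau Hj ltac:(lra)). pose proof (Hbound j T Hj ltac:(lra)).
    pose proof (Hc k). unfold lo in *. lra.
  - unfold step in Hck. lra.
  - intros m Hm.
    replace (c k + INR m * h) with (c (k + 2 * m)%nat)
      by (unfold c, step; rewrite plus_INR, mult_INR; simpl; field).
    pose proof (Hmon K (c (k + 2 * m)%nat) (proj1 HK) T tau ltac:(lra) Htau).
    pose proof (Hflat (k + 2 * m)%nat ltac:(lia) tau Htau). simpl in *. lra.
  - exists j. split; [exact Hj|]. unfold step in Hck. apply Rabs_def1; lra.
Qed.

Lemma solution_converges i : (i < N)%nat -> exists l, lim_infty (x i) l.
Proof.
  intros Hi. apply (lim_infty_cauchy _ t0). intros eta Heta.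
  pose proof (pos_INR N) as HN.
  set (h := eta / (4 * INR N + 1)).
  assert (Hh : 0 < h) by (apply Rdiv_lt_0_compat; lra).
  assert (Hh4 : 4 * h * INR N <= eta).
  { assert (h * (4 * INR N + 1) = eta) by (unfold h; field; lra). nra. }
  destruct (agents_near_snapshot h Hh) as [T [HT Hnear]].
  exists T. split; [lra|]. intros t Ht.
  set (L := map (fun j => x j T) (seq 0 N)).
  assert (Hlen : length L = N) by (unfold L; now rewrite length_map, length_seq).
  eapply Rle_trans; [apply (continuity_oscillation_le (x i) T t (2 * h) L); try lra|].
  - intros tau Htau. apply Hcont; [exact Hi|lra].
  - intros tau Htau. destruct (Hnear i tau Hi ltac:(lra)) as [j [Hj Hjx]].
    exists (x j T). split; [|exact Hjx].
    apply in_map_iff. exists j. split; [reflexivity|apply in_seq; lia].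
  - rewrite Hlen. lra.
Qed.

End Convergence.

Theorem lemma5 (N : nat) (s : R) (alpha : nat -> nat -> R -> R) (t0 : R)
  (x : nat -> R -> R) :
  0 < s -> 0 <= t0 ->
  admissible_weights N alpha ->
  caratheodory_solution N s alpha t0 x ->
  forall i, (i < N)%nat ->
    exists xs, lim_infty (x i) xs /\
      rmin_over N (fun j => x j t0) <= xs <= rmax_over N (fun j => x j t0).
Proof.
  intros Hs Ht0 Hadm Hsol i Hi.
  pose proof (solution_in_hull N s alpha t0 x Hs Ht0 Hadm Hsol) as Hhull.
  destruct (solution_converges N x t0 _ _ Hhull (solution_continuity_pt N s alpha t0 x Hsol)
              (potential_nonincreasing N s alpha t0 x Hs Ht0 Hadm Hsol) i Hi) as [l Hl].
  exists l. split; [exact Hl|].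
  apply (lim_infty_bounds (x i) l t0); [exact Hl|]. intros t Ht. now apply Hhull.
Qed.
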